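(* Let $0<\varepsilon'<1$ and $\varepsilon=\varepsilon'/2$. Algorithm A run on $G$ with parameter $\varepsilon$ terminates and outputs a matching $M$ of $G$ with $w(M)\ge(1-\varepsilon')\,w(M^* )$, where $M^*$ is a maximum weight matching of $G$.
   Context: Let $G=(U\cup V,E)$ be a bipartite graph with real edge weights $w(uv)\ge 1$ for all $uv\in E$, $N(x)$ the neighbourhood of vertex $x$, and $w(F)=\sum_{e\in F}w(e)$. For $0<\varepsilon<1$ let $\mathrm{iLog}(x)=\lfloor\log_{1+\varepsilon}x\rfloor$, $k_{max}=\mathrm{iLog}(\max_{e\in E}w(e))$, $k_{min}$ the smallest integer with $(1+\varepsilon)^{-k_{min}}\le\varepsilon$, and $j_{uv}=\mathrm{iLog}(w(uv))$. Algorithm A (MultiplicativeAuction): set $M=\emptyset$, $y_u=0$ for all $u\in U$, $j_v=k_{max}$ for all $v\in V$. For each $v\in V$ build a queue $Q_v$ containing the pair $(i,uv)$ for every $u\in N(v)$ and every integer $i$ with $-k_{min}\le i\le j_{uv}$, ordered so that the first components are non-increasing (ties arbitrary). Then for each $v\in V$ (in arbitrary order) call $\textsc{MatchR}(v)$, and finally output $M$. Here $\textsc{MatchR}(v)$ is: while $Q_v$ is nonempty: remove the first pair $(j,uv)$ of $Q_v$; set $j_v\leftarrow j$; let $\mathrm{util}(uv)=w(uv)-y_u$ (with the current $y_u$); if $\mathrm{util}(uv)\ge(1+\varepsilon)^j$ then set $y_u\leftarrow y_u+\varepsilon\cdot\mathrm{util}(uv)$, and if $u$ is currently matched in $M$ to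 some $v'$, replace $uv'$ by $uv$ in $M$, call $\textsc{MatchR}(v')$ and then return; otherwise add $uv$ to $M$ and return. (If the test fails, continue the while-loop.) *)

From HB Require Import structures.
From mathcomp Require Import all_boot all_order all_algebra.
From mathcomp Require Import reals exp.
Set Implicit Arguments. Unset Strict Implicit. Unset Printing Implicit Defensive.
Import Order.TTheory GRing.Theory Num.Theory.
Local Open Scope ring_scope.

Section Auction.
Variables (R : realType) (U V : finType).
Variables (E : U -> V -> bool) (w : U -> V -> R).

Definition iLog (eps x : R) : int := Num.floor (ln x / ln (1 + eps)).

Definition is_kmin (eps : R) (k : int) : Prop :=
  (1 + eps) ^ (- k) <= eps /\
  forall k' : int, (1 + eps) ^ (- k') <= eps -> k <= k'.

Definition wmax : R := \big[Num.max/0]_(p : U * V | E p.1 p.2) w p.1 p.2.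
Definition kmax (eps : R) : int := iLog eps wmax.
Definition juv (eps : R) (u : U) (v : V) : int := iLog eps (w u v).

Definition is_matching (M : {set U * V}) : Prop :=
  (forall p, p \in M -> E p.1 p.2) /\
  (forall p q, p \in M -> q \in M -> p.1 = q.1 -> p = q) /\
  (forall p q, p \in M -> q \in M -> p.2 = q.2 -> p = q).

Definition weight (M : {set U * V}) : R := \sum_(p in M) w p.1 p.2.

Definition is_max_weight_matching (M : {set U * V}) : Prop :=
  is_matching M /\ forall N, is_matching N -> weight N <= weight M.

Definition valid_queue (eps : R) (kmin : int) (v : V) (q : seq (int * U)) : Prop :=
  uniq q /\
  (forall p : int * U, p \in q = [&& E p.2 v, - kmin <= p.1 & p.1 <= juv eps p.2 v]) /\
  sorted (fun a b : int * U => b.1 <= a.1) q.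

Record state := State {
  st_M : {set U * V};
  st_y : U -> R;
  st_j : V -> int;
  st_Q : V -> seq (int * U) }.

Definition upd {A : eqType} {B : Type} (f : A -> B) (a : A) (b : B) : A -> B :=
  fun x => if x == a then b else f x.

(* MatchR(v), with a fuel bound on the total number of loop iterations
   (None = fuel exhausted).  The recursive call MatchR(v') is a tail call. *)
Fixpoint matchR (eps : R) (fuel : nat) (v : V) (s : state) : option state :=
  match fuel with
  | 0%N => None
  | f.+1 =>
    match st_Q s v with
    | [::] => Some s
    | (j, u) :: rest =>
      let s1 := State (st_M s) (st_y s) (upd (st_j s) v j) (upd (st_Q s) v rest) in
      let util := w u v - st_y s1 u in
      if (1 + eps) ^ j <= util then
        let y2 := upd (st_y s1) u (st_y s1 u + eps * util) in
        match [pick v' | (u, v') \in st_M s1] with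
        | Some v' =>
            matchR eps f v'
              (State ((u, v) |: (st_M s1 :\ (u, v'))) y2 (st_j s1) (st_Q s1))
        | None => Some (State ((u, v) |: st_M s1) y2 (st_j s1) (st_Q s1))
        end
      else matchR eps f v s1
    end
  end.

Fixpoint run_all (eps : R) (fuel : nat) (vs : seq V) (s : state) : option state :=
  match vs with
  | [::] => Some s
  | v :: vs' =>
    match matchR eps fuel v s with
    | Some s' => run_all eps fuel vs' s'
    | None => None
    end
  end.

Definition init_state (eps : R) (Q0 : V -> seq (int * U)) : state :=
  State set0 (fun _ => 0) (fun _ => kmax eps) Q0.

Definition multiplicative_auction (eps : R) (Q0 : V -> seq (int * U))
  (vs : seq V) (fuel : nat) : option {set U * V} :=
  match run_all eps fuel vs (init_state eps Q0) with
  | Some s => Some (st_M s)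
  | None => None
  end.

End Auction.

From mathcomp Require Import all_boot all_order all_algebra.
From mathcomp Require Import reals exp.
From mathcomp Require Import ring lra zify.
Import Order.TTheory GRing.Theory Num.Theory.
Local Open Scope ring_scope.

(* Correctness of the multiplicative auction by a primal-dual argument, with
   b = 1 + eps, util(uv) = w(uv) - y_u, and D_v = util(uv) if v is matched
   to u, D_v = 0 if v is free.
   1. MatchR preserves an invariant [Inv]: M is a matching, the prices y are
      nonnegative and vanish on free vertices, each queue is a suffix of its
      initial queue, removed pairs (i, u) of Q_v have util(uv) < b^i, and
      matched edges uv have (1 - eps) b^(j_v) <= util(uv).
   2. Each iteration shortens the queues, so with enough fuel Algorithm A
      terminates, leaving every v matched or with an empty queue (settled).
   3. Then (1 - eps) w(uv) <= b (y_u + D_v) on every edge and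
      w(M) = sum y + sum D, so (1 - eps) w(N) <= (1 + eps) w(M) for every
      matching N, whence w(M) >= (1 - 2 eps) w(N). *)

Set Implicit Arguments. Unset Strict Implicit.

Section InjectiveSums.
Variable R : numDomainType.

Lemma sum_inj_le (T I : finType) (S : {set T}) (g : T -> I) (f : I -> R) :
  {in S &, injective g} -> (forall i, 0 <= f i) ->
  \sum_(p in S) f (g p) <= \sum_i f i.
Proof.
move=> g_inj f_ge0; rewrite -(big_imset _ g_inj) /= big_mkcond /=.
by apply: ler_sum => i _; case: ifP.
Qed.

Lemma sum_inj_eq (T I : finType) (S : {set T}) (g : T -> I) (f : I -> R) :
  {in S &, injective g} -> (forall i, i \notin g @: S -> f i = 0) ->
  \sum_(p in S) f (g p) = \sum_i f i.
Proof.
move=> g_inj f0; rewrite -(big_imset _ g_inj) /= big_mkcond /=.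
by apply: eq_bigr => i _; case: ifPn => // /f0 ->.
Qed.

End InjectiveSums.

Lemma ratio_one_minus_twice (R : realFieldType) (e N M : R) :
  0 < e -> 0 <= N -> (1 - e) * N <= (1 + e) * M -> (1 - 2 * e) * N <= M.
Proof.
move=> e_gt0 N_ge0 hNM.
have eN_ge0 : 0 <= e * (e * N) by rewrite !mulr_ge0 // ltW.
have : (1 + e) * ((1 - 2 * e) * N - M) <= 0 by lra.
by rewrite pmulr_rle0 ?subr_le0 //; lra.
Qed.

Lemma upd_eq {A : eqType} {B : Type} (f : A -> B) a c : upd f a c a = c.
Proof. by rewrite /upd eqxx. Qed.

Lemma upd_neq {A : eqType} {B : Type} (f : A -> B) a c x :
  x != a -> upd f a c x = f x.
Proof. by rewrite /upd => /negbTE ->. Qed.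

Section Auction.
Variables (R : realType) (U V : finType) (E : U -> V -> bool) (w : U -> V -> R).
Variables (eps : R) (kmin : int) (Q0 : V -> seq (int * U)).
Hypothesis w_ge1 : forall u v, E u v -> 1 <= w u v.
Hypothesis eps_gt0 : 0 < eps.
Hypothesis eps_lt1 : eps < 1.
Hypothesis Q0_valid : forall v, valid_queue E w eps kmin v (Q0 v).
Hypothesis kmin_small : (1 + eps) ^ (- kmin) <= eps.

Local Notation b := (1 + eps).
Local Notation state := (state R U V).

Lemma b_gt1 : 1 < b.
Proof. by rewrite ltrDl. Qed.

Lemma b_gt0 : 0 < b.
Proof. exact: lt_trans ltr01 b_gt1. Qed.

Lemma b_expz_gt0 (j : int) : 0 < b ^ j.
Proof. exact: exprz_gt0 b_gt0. Qed.

Lemma iLog_ge0 x : 1 <= x -> 0 <= iLog eps x.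
Proof.
move=> x_ge1; rewrite /iLog floor_ge0 divr_ge0 //; first exact: ln_ge0.
exact/ln_ge0/ltW/b_gt1.
Qed.

Lemma iLog_lt x : 1 <= x -> x < b ^ (iLog eps x + 1).
Proof.
move=> x_ge1; have lnb_gt0 : 0 < ln b by apply/ln_gt0/b_gt1.
have : 0 <= iLog eps x + 1 by rewrite addr_ge0 ?iLog_ge0.
have := floorD1_gt (ln x / ln b); rewrite /iLog.
case: (Num.floor _ + 1) => [n|n] hfl //.
have x_gt0 : 0 < x by apply: lt_le_trans ltr01 x_ge1.
rewrite -ltr_ln ?posrE ?exprn_gt0 ?b_gt0 // lnXn ?b_gt0 // -mulr_natl.
by rewrite -ltr_pdivrMr.
Qed.

(* Since eps < 1 = b^0, the lowest level -kmin is nonpositive. *)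
Lemma kmin_ge0 : 0 <= kmin.
Proof.
case: (leP 0 kmin) => // kmin_lt0.
have : b ^ 0 <= b ^ (- kmin) by rewrite ler_eXz2l ?b_gt1 // oppr_ge0 ltW.
by rewrite expr0z => /le_trans /(_ kmin_small); rewrite leNgt eps_lt1.
Qed.

Lemma shrink_util_lt (j : int) d : d < b ^ (j + 1) -> (1 - eps) * d < b ^ j.
Proof.
rewrite expfzDr ?expr1z ?gt_eqF ?b_gt0 // => hd.
have := b_expz_gt0 j; set B := b ^ j => B_gt0.
have : (1 - eps) * d < (1 - eps) * (B * b) by rewrite ltr_pM2l // subr_gt0.
nra.
Qed.

Lemma memQ0 v i u :
  ((i, u) \in Q0 v) = [&& E u v, - kmin <= i & i <= juv w eps u v].
Proof. by case: (Q0_valid v) => _ [-> _]. Qed.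

Lemma suffix_head v k j u rest : drop k (Q0 v) = (j, u) :: rest ->
  [/\ (j, u) \in Q0 v, rest = drop k.+1 (Q0 v)
    & forall p, p \in rest -> p.1 <= j].
Proof.
move=> hk.
have sorted_sfx : sorted (fun p q : int * U => q.1 <= p.1) ((j, u) :: rest).
  by rewrite -hk; apply: drop_sorted; case: (Q0_valid v) => _ [].
split; first by apply: (@mem_drop k); rewrite hk mem_head.
  by rewrite -add1n -drop_drop hk /= drop0.
move=> p p_in; have lev_trans : transitive (fun p q : int * U => q.1 <= p.1).
  by move=> q1 q2 q3 h12 h23; apply: le_trans h23 h12.
by move: (order_path_min lev_trans sorted_sfx) => /allP /(_ p p_in).
Qed.

Record Inv (s : state) : Prop := {
  inv_matching : is_matching E (st_M s);
  inv_y_ge0 : forall u, 0 <= st_y s u;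
  inv_y_free : forall u, (forall v, (u, v) \notin st_M s) -> st_y s u = 0;
  inv_suffix : forall v, exists k, st_Q s v = drop k (Q0 v);
  inv_removed : forall v p, p \in Q0 v -> p \notin st_Q s v ->
    w p.2 v - st_y s p.2 < b ^ p.1;
  inv_matched : forall u v, (u, v) \in st_M s ->
    [/\ (1 - eps) * b ^ st_j s v <= w u v - st_y s u, - kmin <= st_j s v
      & forall p, p \in st_Q s v -> p.1 <= st_j s v] }.

Lemma Inv_init : Inv (init_state E w eps Q0).
Proof.
split=> //=; last by move=> u v; rewrite in_set0.
- by split; last split; move=> p; rewrite in_set0.
- by move=> v; exists 0%N; rewrite drop0.
- by move=> v p ->.
Qed.

(* If no pair left in Q_v has level above j >= -kmin, then every edge uv has
   utility below b^(j+1): either the bid (j+1, u) was already rejected, or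
   j is at least the level of w(uv). *)
Lemma util_lt_next s u v j : Inv s -> E u v -> - kmin <= j ->
  (forall p, p \in st_Q s v -> p.1 <= j) -> w u v - st_y s u < b ^ (j + 1).
Proof.
move=> I Euv j_ge hQ; case: (ltP j (juv w eps u v)) => hj.
  apply: (inv_removed I (p := (j + 1, u))) => /=.
    by rewrite memQ0 Euv /=; apply/andP; split; lia.
  by apply/negP => /hQ /=; lia.
apply: (@le_lt_trans _ _ (w u v)); first by rewrite lerBlDr lerDl inv_y_ge0.
apply: lt_le_trans (iLog_lt (w_ge1 Euv)) _.
by rewrite ler_eXz2l ?b_gt1 //; rewrite /juv in hj; lia.
Qed.

Lemma head_facts s x j u rest : Inv s -> st_Q s x = (j, u) :: rest ->
  [/\ E u x, - kmin <= j, exists k, rest = drop k (Q0 x),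
      forall p, p \in rest -> p.1 <= j
    & w u x - st_y s u < b ^ (j + 1)].
Proof.
move=> I hQ; have [k hk] := inv_suffix I x.
have sfx : drop k (Q0 x) = (j, u) :: rest by rewrite -hk.
have [] := suffix_head sfx.
rewrite memQ0 => /and3P [Eux j_ge _] rest_eq rest_le.
split=> //; first by exists k.+1.
apply: util_lt_next => // p; rewrite hQ in_cons.
by case/orP=> [/eqP -> // | /rest_le].
Qed.

Definition pop (s : state) x j rest : state :=
  State (st_M s) (st_y s) (upd (st_j s) x j) (upd (st_Q s) x rest).

(* u wins x at level j: u is (re)matched to x and raises y_u by eps util(ux);
   M0 is the matching without the edges at u. *)
Definition bid (s : state) x j u rest (M0 : {set U * V}) : state :=
  State ((u, x) |: M0) (upd (st_y s) u (st_y s u + eps * (w u x - st_y s u)))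
    (upd (st_j s) x j) (upd (st_Q s) x rest).

Lemma suffix_pop s x j u rest : Inv s -> st_Q s x = (j, u) :: rest ->
  forall v, exists k, upd (st_Q s) x rest v = drop k (Q0 v).
Proof.
move=> I hQ v; have [_ _ [k hk] _ _] := head_facts I hQ.
case: (eqVneq v x) => [-> | nvx]; first by exists k; rewrite upd_eq.
by rewrite upd_neq //; apply: inv_suffix.
Qed.

Lemma removed_pop s y' x j u rest : Inv s -> st_Q s x = (j, u) :: rest ->
  (forall u', st_y s u' <= y' u') -> w u x - y' u < b ^ j ->
  forall v p, p \in Q0 v -> p \notin upd (st_Q s) x rest v ->
    w p.2 v - y' p.2 < b ^ p.1.
Proof.
move=> I hQ y_le head_lt v p p_in.
have old_bound : p \notin st_Q s v -> w p.2 v - y' p.2 < b ^ p.1.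
  by move/(inv_removed I p_in); apply: le_lt_trans; rewrite lerD2l lerN2.
case: (eqVneq v x) => [vx | nvx]; last by rewrite upd_neq.
subst v; rewrite upd_eq => p_notin; case: (boolP (p \in st_Q s x)) => [|/old_bound //].
by rewrite hQ in_cons (negbTE p_notin) orbF => /eqP ->.
Qed.

Lemma pop_inv s x j u rest : Inv s -> (forall u', (u', x) \notin st_M s) ->
  st_Q s x = (j, u) :: rest -> w u x - st_y s u < b ^ j -> Inv (pop s x j rest).
Proof.
move=> I x_free hQ rejected; split=> /=.
- exact: inv_matching I.
- exact: inv_y_ge0 I.
- exact: inv_y_free I.
- exact: suffix_pop I hQ.
- exact: removed_pop I hQ (fun _ => lexx _) rejected.
- move=> u' v uv_in.
  have nvx : v != x by apply: contraTneq uv_in => ->; apply: x_free.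
  by rewrite !upd_neq //; apply: inv_matched.
Qed.

Lemma is_matching_sub (M0 M : {set U * V}) :
  {subset M0 <= M} -> is_matching E M -> is_matching E M0.
Proof.
move=> sub [hE [h1 h2]]; split; first by move=> p /sub /hE.
by split=> p q /sub hp /sub hq; [apply: h1 | apply: h2].
Qed.

Lemma is_matching_insert (M0 : {set U * V}) u x : is_matching E M0 -> E u x ->
  (forall p, p \in M0 -> p.1 != u /\ p.2 != x) -> is_matching E ((u, x) |: M0).
Proof.
move=> [hE [h1 h2]] Eux fresh; split.
  by move=> p; rewrite in_setU1 => /orP [/eqP -> // | /hE].
split=> p q; rewrite !in_setU1 => /orP [/eqP -> | hp] /orP [/eqP -> | hq] //= e.
- by have [+ _] := fresh q hq; rewrite -e eqxx.
- by have [+ _] := fresh p hp; rewrite e eqxx.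
- exact: h1.
- by have [_ +] := fresh q hq; rewrite -e eqxx.
- by have [_ +] := fresh p hp; rewrite e eqxx.
- exact: h2.
Qed.

Lemma util_after_bid (y d : R) :
  d - (y + eps * (d - y)) = (1 - eps) * (d - y).
Proof. by ring. Qed.

Lemma bid_inv s x j u rest (M0 : {set U * V}) : Inv s ->
  (forall u', (u', x) \notin st_M s) -> st_Q s x = (j, u) :: rest ->
  b ^ j <= w u x - st_y s u ->
  (forall p, (p \in M0) = (p \in st_M s) && (p.1 != u)) ->
  Inv (bid s x j u rest M0).
Proof.
move=> I x_free hQ accepted hM0.
have [Eux j_ge _ rest_le util_lt] := head_facts I hQ.
have util_gt0 : 0 < w u x - st_y s u := lt_le_trans (b_expz_gt0 j) accepted.
have y_le u' :
    st_y s u' <= upd (st_y s) u (st_y s u + eps * (w u x - st_y s u)) u'.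
  case: (eqVneq u' u) => [-> | nu]; last by rewrite upd_neq.
  by rewrite upd_eq lerDl mulr_ge0 // ltW.
have M0_sub : {subset M0 <= st_M s} by move=> p; rewrite hM0 => /andP [].
split=> /=.
- apply: is_matching_insert => //; first exact: is_matching_sub (inv_matching I).
  move=> p; rewrite hM0 => /andP [p_in ->]; split=> //.
  apply: contraTneq p_in => px; move: (x_free p.1).
  by rewrite -px -surjective_pairing.
- by move=> u'; apply: le_trans (y_le u'); apply: inv_y_ge0.
- move=> u' u'_free; have nu : u' != u.
    by apply: contraTneq (u'_free x) => ->; rewrite in_setU1 eqxx.
  rewrite upd_neq //; apply: (inv_y_free I) => v.
  apply: contra (u'_free v) => uv_in.
  by rewrite in_setU1 hM0 uv_in nu orbT.
- exact: suffix_pop I hQ.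
- apply: removed_pop I hQ y_le _.
  by rewrite upd_eq util_after_bid; apply: shrink_util_lt.
- move=> u' v; rewrite in_setU1 hM0 => /orP [/eqP [-> ->] | /andP [uv_in nu]].
    rewrite !upd_eq util_after_bid; split=> //.
    by rewrite ler_wpM2l // subr_ge0 ltW.
  have nvx : v != x by apply: contraTneq uv_in => ->; apply: x_free.
  by rewrite !upd_neq //; apply: inv_matched.
Qed.

Definition matched (s : state) v := exists u, (u, v) \in st_M s.
Definition settled (s : state) v := matched s v \/ st_Q s v = [::].
Definition tot (s : state) := (\sum_v size (st_Q s v))%N.

Lemma unmatched_free s x : ~ matched s x -> forall u, (u, x) \notin st_M s.
Proof. by move=> x_free u; apply/negP => ux_in; apply: x_free; exists u. Qed.

Lemma tot_pop s s' x p rest : st_Q s x = p :: rest ->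
  st_Q s' = upd (st_Q s) x rest -> (tot s' < tot s)%N.
Proof.
move=> hQ hQ'; rewrite /tot hQ' (bigD1 x) //= [X in (_ < X)%N](bigD1 x) //=.
rewrite upd_eq hQ (eq_bigr (fun v => size (st_Q s v))) /=; last first.
  by move=> v nvx; rewrite upd_neq.
by rewrite ltn_add2r.
Qed.

Lemma settled_pop s x j rest v :
  v != x -> settled s v -> settled (pop s x j rest) v.
Proof. by move=> nvx [v_matched | hQ]; [left | right; rewrite /= upd_neq]. Qed.

Lemma settled_bid s x j u rest (M0 : {set U * V}) v :
  (forall p, (p \in M0) = (p \in st_M s) && (p.1 != u)) ->
  v != x -> (u, v) \notin st_M s -> settled s v ->
  settled (bid s x j u rest M0) v.
Proof.
move=> hM0 nvx uv_notin [[u0 u0v_in] | hQ]; last by right; rewrite /= upd_neq.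
left; exists u0; rewrite /= in_setU1 hM0 u0v_in /=; apply/orP; right.
by apply: contraNneq uv_notin => <-.
Qed.

Lemma displaced_spec (s : state) u v' :
  is_matching E (st_M s) -> (u, v') \in st_M s ->
  (forall p, (p \in st_M s :\ (u, v')) = (p \in st_M s) && (p.1 != u)) /\
  (forall v, v != v' -> (u, v) \notin st_M s).
Proof.
move=> [_ [fst_inj _]] uv'_in; split=> [p | v nvv'].
  rewrite in_setD1; case p_in: (p \in st_M s); rewrite ?andbF //= andbT.
  by congr (~~ _); apply/eqP/eqP => [-> // | pu]; apply: fst_inj.
by apply: contra nvv' => uv_in; case: (fst_inj _ _ uv_in uv'_in erefl) => ->.
Qed.

Lemma bid_frees s x j u rest (M0 : {set U * V}) v' : is_matching E (st_M s) ->
  (forall p, (p \in M0) = (p \in st_M s) && (p.1 != u)) ->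
  (forall u', (u', x) \notin st_M s) -> (u, v') \in st_M s ->
  ~ matched (bid s x j u rest M0) v'.
Proof.
move=> [_ [_ snd_inj]] hM0 x_free uv'_in [u0].
rewrite /= in_setU1 hM0 => /orP [/eqP [_ v'x] | /andP [u0v'_in nu]].
  by move: (x_free u); rewrite -v'x uv'_in.
by move: nu; rewrite (snd_inj _ _ u0v'_in uv'_in) ?eqxx.
Qed.

Lemma matched_bid s x j u rest (M0 : {set U * V}) v : {subset M0 <= st_M s} ->
  matched (bid s x j u rest M0) v -> matched s v \/ v = x.
Proof.
move=> sub [u0]; rewrite /= in_setU1 => /orP [/eqP [_ ->] | /sub u0v_in].
  by right.
by left; exists u0.
Qed.

Lemma matched_bid_target s x j u rest (M0 : {set U * V}) :
  matched (bid s x j u rest M0) x.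
Proof. by exists u; rewrite /= in_setU1 eqxx. Qed.

(* Specification of a call MatchR(x) from state s ending in state s', where
   the vertices satisfying A were settled in s. *)
Definition match_post x (A : V -> Prop) (s s' : state) : Prop :=
  [/\ Inv s', forall v, A v \/ v = x -> settled s' v, (tot s' <= tot s)%N
    & forall v, matched s' v -> matched s v \/ v = x].

Lemma match_post_step x A s s2 x2 A2 s' :
  (forall v, A v \/ v = x -> A2 v \/ v = x2) -> (tot s2 <= tot s)%N ->
  (forall v, matched s2 v -> matched s v \/ v = x) -> matched s x2 \/ x2 = x ->
  match_post x2 A2 s2 s' -> match_post x A s s'.
Proof.
move=> hA htot hm hx2 [I' settled' tot' matched']; split=> //.
- by move=> v /hA; apply: settled'.
- exact: leq_trans tot' htot.
- move=> v /matched' [/hm // | ->]; exact: hx2.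
Qed.

Lemma reject_post x A s j rest s' : (tot (pop s x j rest) <= tot s)%N ->
  match_post x (fun v => A v /\ v <> x) (pop s x j rest) s' ->
  match_post x A s s'.
Proof.
move=> htot; apply: match_post_step => //; last by right.
- move=> v hv; case: (eqVneq v x) => [-> | /eqP nvx]; first by right.
  by left; split=> //; case: hv.
- by move=> v; left.
Qed.

Lemma displace_post x A s j u rest v' s' : (u, v') \in st_M s ->
  (tot (bid s x j u rest (st_M s :\ (u, v'))) <= tot s)%N ->
  match_post v' (fun v => (A v \/ v = x) /\ v <> v')
    (bid s x j u rest (st_M s :\ (u, v'))) s' ->
  match_post x A s s'.
Proof.
move=> uv'_in htot; apply: match_post_step => //.
- by move=> v hv; case: (eqVneq v v') => [-> | /eqP nvv']; [right | left].
- by move=> v; apply: matched_bid => p /setD1P [].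
- by left; exists u.
Qed.

Lemma free_bid_post x A s j u rest : Inv s -> ~ matched s x ->
  (forall v, A v -> settled s v) -> st_Q s x = (j, u) :: rest ->
  b ^ j <= w u x - st_y s u -> (forall v, (u, v) \notin st_M s) ->
  match_post x A s (bid s x j u rest (st_M s)).
Proof.
move=> I x_unm A_set hQ accepted u_free.
have hM0 p : (p \in st_M s) = (p \in st_M s) && (p.1 != u).
  case p_in: (p \in st_M s) => //=; apply/esym/eqP => pu.
  by move: (u_free p.2); rewrite -pu -surjective_pairing p_in.
split.
- exact: bid_inv I (unmatched_free x_unm) hQ accepted hM0.
- move=> v hv; case: (eqVneq v x) => [-> | nvx].
    by left; apply: matched_bid_target.
  have Av : A v by case: hv => // vx; rewrite vx eqxx in nvx.
  exact: settled_bid hM0 nvx (u_free v) (A_set v Av).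
- by apply: ltnW; apply: tot_pop hQ _.
- by move=> v; apply: matched_bid => p.
Qed.

Lemma matchR_correct f x s A : Inv s -> ~ matched s x ->
  (forall v, A v -> settled s v) -> (tot s < f)%N ->
  exists2 s', matchR w eps f x s = Some s' & match_post x A s s'.
Proof.
elim: f x s A => [|f IH] x s A I x_unm A_set //= fuel.
have x_free := unmatched_free x_unm.
have fuel_s : (tot s <= f)%N by rewrite -ltnS.
case hQ: (st_Q s x) => [|[j u] rest].
  exists s => //; split=> //; last by move=> v; left.
  by move=> v [/A_set | ->] //; right.
case: ifPn => [accepted | rejected]; last first.
  have I1 : Inv (pop s x j rest) by apply: pop_inv I x_free hQ _; rewrite ltNge.
  have A1_set v : A v /\ v <> x -> settled (pop s x j rest) v.
    by case=> Av /eqP nvx; apply: settled_pop nvx (A_set v Av).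
  have tot1 : (tot (pop s x j rest) < tot s)%N by apply: tot_pop hQ _.
  have [s' run' post'] := IH x _ _ I1 x_unm A1_set (leq_trans tot1 fuel_s).
  by exists s'; last exact: reject_post (ltnW tot1) post'.
case: pickP => [v' uv'_in | u_free]; last first.
  exists (bid s x j u rest (st_M s)) => //.
  by apply: free_bid_post => // v; apply/negbT/u_free.
have [hM0 u_other] := displaced_spec (inv_matching I) uv'_in.
have I2 := bid_inv I x_free hQ accepted hM0.
set s2 := bid s x j u rest (st_M s :\ (u, v')) in I2.
have v'_unm : ~ matched s2 v' := bid_frees (inv_matching I) hM0 x_free uv'_in.
have A2_set v : (A v \/ v = x) /\ v <> v' -> settled s2 v.
  case=> [[Av | ->] /eqP nvv']; last by left; apply: matched_bid_target.
  case: (eqVneq v x) => [-> | nvx]; first by left; apply: matched_bid_target.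
  exact: settled_bid hM0 nvx (u_other v nvv') (A_set v Av).
have tot2 : (tot s2 < tot s)%N by apply: tot_pop hQ _.
have [s' run' post'] := IH v' _ _ I2 v'_unm A2_set (leq_trans tot2 fuel_s).
by exists s'; last exact: displace_post uv'_in (ltnW tot2) post'.
Qed.

Lemma run_all_correct f vs s A : Inv s -> (forall v, A v -> settled s v) ->
  uniq vs -> (forall v, v \in vs -> ~ matched s v) -> (tot s < f)%N ->
  exists2 s', run_all w eps f vs s = Some s' &
    Inv s' /\ forall v, A v \/ v \in vs -> settled s' v.
Proof.
elim: vs s A => [|x vs IH] s A I A_set /=.
  by move=> *; exists s => //; split=> // v [/A_set |].
case/andP=> x_notin vs_uniq vs_unm fuel.
have [s1 -> [I1 set1 tot1 matched1]] :=
  matchR_correct I (vs_unm x (mem_head _ _)) A_set fuel.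
have vs_unm1 v : v \in vs -> ~ matched s1 v.
  move=> v_in /matched1 [|vx]; first by apply: vs_unm; rewrite in_cons v_in orbT.
  by move: x_notin; rewrite -vx v_in.
have [s' -> [I' set']] :=
  IH s1 _ I1 set1 vs_uniq vs_unm1 (leq_ltn_trans tot1 fuel).
exists s' => //; split=> // v hv; apply: set'.
case: hv => [Av | ]; first by left; left.
by rewrite in_cons => /orP [/eqP -> | v_in]; [left; right | right].
Qed.

Definition dual_v (s : state) v : R :=
  if [pick u | (u, v) \in st_M s] is Some u then w u v - st_y s u else 0.

Lemma dual_v_matched s u v : is_matching E (st_M s) -> (u, v) \in st_M s ->
  dual_v s v = w u v - st_y s u.
Proof.
move=> [_ [_ snd_inj]] uv_in; rewrite /dual_v.
case: pickP => [u' u'v_in | /(_ u)]; last by rewrite uv_in.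
by have [->] := snd_inj _ _ u'v_in uv_in erefl.
Qed.

Lemma dual_v_ge0 s : Inv s -> forall v, 0 <= dual_v s v.
Proof.
move=> I v; rewrite /dual_v; case: pickP => [u uv_in | //].
have [+ _ _] := inv_matched I uv_in; apply: le_trans.
by rewrite mulr_ge0 ?subr_ge0 ?ltW ?b_expz_gt0.
Qed.

Lemma weight_split s : Inv s ->
  weight w (st_M s) = \sum_u st_y s u + \sum_v dual_v s v.
Proof.
move=> I; have [_ [fst_inj snd_inj]] := inv_matching I.
rewrite -(@sum_inj_eq _ _ _ (st_M s) fst (st_y s)); last 2 first.
- by move=> p q hp hq; apply: fst_inj.
- move=> u u_notin; apply: (inv_y_free I) => v.
  by apply: contra u_notin => uv_in; apply/imsetP; exists (u, v).
rewrite -(@sum_inj_eq _ _ _ (st_M s) snd (dual_v s)); last 2 first.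
- by move=> p q hp hq; apply: snd_inj.
- move=> v v_notin; rewrite /dual_v; case: pickP => [u uv_in | //].
  by case/imsetP: v_notin; exists (u, v).
rewrite -big_split /=; apply: eq_bigr => -[u v] uv_in /=.
by rewrite (dual_v_matched (inv_matching I) uv_in) addrC subrK.
Qed.

Lemma edge_cover s u v : Inv s -> settled s v -> E u v ->
  (1 - eps) * w u v <= b * (st_y s u + dual_v s v).
Proof.
move=> I v_set Euv; have y_ge0 := inv_y_ge0 I u.
have eps_y_ge0 : 0 <= eps * st_y s u := mulr_ge0 (ltW eps_gt0) y_ge0.
rewrite /dual_v; case: pickP => [u0 u0v_in | v_free].
  have [D_ge j_ge Q_le] := inv_matched I u0v_in.
  have := util_lt_next I Euv j_ge Q_le.
  rewrite expfzDr ?expr1z ?gt_eqF ?b_gt0 //.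
  set B := b ^ st_j s v in D_ge *; set D := w u0 v - st_y s u0 in D_ge *.
  move=> util_lt.
  have : (1 - eps) * (w u v - st_y s u) <= (1 - eps) * (B * b).
    by rewrite ler_pM2l ?subr_gt0 // ltW.
  have : b * ((1 - eps) * B) <= b * D by rewrite ler_pM2l ?b_gt0.
  lra.
have Q_nil : st_Q s v = [::] by case: v_set => // -[u0]; rewrite v_free.
have : w u v - st_y s u < b ^ (- kmin).
  apply: (inv_removed I (p := (- kmin, u))); last by rewrite Q_nil.
  rewrite memQ0 Euv lexx /=; have := iLog_ge0 (w_ge1 Euv); have := kmin_ge0.
  by rewrite /juv; lia.
have : eps * 1 <= eps * w u v by rewrite ler_pM2l ?w_ge1.
move: kmin_small; lra.
Qed.

Lemma weight_dual_bound s N : Inv s -> (forall v, settled s v) ->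
  is_matching E N -> (1 - eps) * weight w N <= b * weight w (st_M s).
Proof.
move=> I all_set [N_E [N_fst N_snd]].
rewrite weight_split // /weight mulr_sumr.
apply: (@le_trans _ _ (\sum_(p in N) b * (st_y s p.1 + dual_v s p.2))).
  by apply: ler_sum => p /N_E; apply: edge_cover.
rewrite -mulr_sumr big_split /= ler_pM2l ?b_gt0 //; apply: lerD.
  apply: (@sum_inj_le _ _ _ _ fst (st_y s) _ (inv_y_ge0 I)).
  by move=> p q *; apply: N_fst.
apply: (@sum_inj_le _ _ _ _ snd (dual_v s) _ (dual_v_ge0 I)).
by move=> p q *; apply: N_snd.
Qed.

Lemma weight_ge0 N : is_matching E N -> 0 <= weight w N.
Proof. by case=> N_E _; apply: sumr_ge0 => p /N_E /w_ge1; apply: le_trans. Qed.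

Lemma auction_sound vs : perm_eq vs (enum V) ->
  exists2 s, run_all w eps (tot (init_state E w eps Q0)).+1 vs
               (init_state E w eps Q0) = Some s &
    is_matching E (st_M s) /\
    forall N, is_matching E N -> (1 - eps) * weight w N <= b * weight w (st_M s).
Proof.
move=> vs_perm; have vs_uniq : uniq vs by rewrite (perm_uniq vs_perm) enum_uniq.
have vs_unm v : v \in vs -> ~ matched (init_state E w eps Q0) v.
  by move=> _ [u]; rewrite in_set0.
have [s run [I all_set]] := run_all_correct (A := fun _ => False) Inv_init
  (fun v => False_ind _) vs_uniq vs_unm (ltnSn _).
exists s => //; split=> [|N]; first exact: inv_matching.
apply: weight_dual_bound => // v; apply: all_set.
by right; rewrite (perm_mem vs_perm) mem_enum.
Qed.

End Auction.

Theorem lemma2 (R : realType) (U V : finType) (E : U -> V -> bool)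
  (w : U -> V -> R) (hw : forall u v, E u v -> 1 <= w u v)
  (eps' : R) (heps' : 0 < eps' < 1) (kmin : int)
  (hkmin : is_kmin (eps' / 2) kmin)
  (Q0 : V -> seq (int * U))
  (hQ0 : forall v, valid_queue E w (eps' / 2) kmin v (Q0 v))
  (vs : seq V) (hvs : perm_eq vs (enum V)) :
  exists (fuel : nat) (M : {set U * V}),
    multiplicative_auction E w (eps' / 2) Q0 vs fuel = Some M /\
    is_matching E M /\
    forall Mstar, is_max_weight_matching E w Mstar ->
      (1 - eps') * weight w Mstar <= weight w M.
Proof.
have [e_gt0 e_lt1] : 0 < eps' / 2 /\ eps' / 2 < 1.
  by case/andP: heps' => *; split; lra.
have [s run [M_matching M_bound]] :=
  auction_sound hw e_gt0 e_lt1 hQ0 (proj1 hkmin) hvs.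
exists (tot (init_state E w (eps' / 2) Q0)).+1, (st_M s).
rewrite /multiplicative_auction run; do 2!split=> //.
move=> Mstar [Mstar_matching _].
have := ratio_one_minus_twice e_gt0 (weight_ge0 hw Mstar_matching)
  (M_bound _ Mstar_matching).
by rewrite [2 * _]mulrC divfK ?pnatr_eq0.
Qed.
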